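(* In the setting below, suppose there exists $t_0\in(0,1]$ such that both $Z_1(t_0)$ and $Z_2(t_0)$ are tangent to the coordinate axes. Then both $Z_1(t)$ and $Z_2(t)$ stay on the corresponding axes for all $t\in(0,1]$.
   Context: Planar three-body problem with masses $m_1=m_2=m_3=1$, $\chi=\{q=(q_1,q_2,q_3)\in(\mathbb{R}^2)^3: q_1+q_2+q_3=0\}$, action $\mathcal{A}(q)=\int_0^1\big(\tfrac12\sum|\dot q_i|^2+\sum_{i<j}\frac{1}{|q_i-q_j|}\big)dt$. Let $Q_{S_4}=\{q: q_1=q_2=(-a_2,0),\ q_3=(2a_2,0),\ a_2\ge0\}$ and $Q_{E_1}=\{q: q_1=(0,-2b_1),\ q_2=(-b_2,b_1),\ q_3=(b_2,b_1),\ b_1,b_2\in\mathbb{R}\}$. Let $q$ minimize $\mathcal{A}$ over $\{q\in H^1([0,1],\chi): q(0)\in Q_{S_4},\ q(1)\in Q_{E_1}\}$; it is collision-free for $t\in(0,1]$ and there satisfies Newton's equations $\ddot q_i=\sum_{j\ne i}\frac{q_j-q_i}{|q_j-q_i|^3}$. Jacobi coordinates: $Z_1=q_1-q_2$, $Z_2=q_3-\frac{q_1+q_2}{2}$. A vector function $Z$ is tangent to the $x$-axis (resp. $y$-axis) at $t_0$ if $Z_y(t_0)=\dot Z_y(t_0)=0$ (resp. $Z_x(t_0)=\dot Z_x(t_0)=0$); ''the corresponding axes'' means, for each $i$, the axis to which $Z_i$ is tangent at $t_0$. *)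

From HB Require Import structures.
From mathcomp Require Import all_boot all_order all_algebra.
From mathcomp Require Import all_classical all_reals all_analysis.
Set Implicit Arguments. Unset Strict Implicit. Unset Printing Implicit Defensive.
Import Order.TTheory GRing.Theory Num.Theory.
Import numFieldNormedType.Exports.
Local Open Scope classical_set_scope.
Local Open Scope ring_scope.

Section ThreeBody.
Variable R : realType.

Definition pt := (R * R)%type.

Definition bd1 : 'I_3 := @Ordinal 3 0 isT.
Definition bd2 : 'I_3 := @Ordinal 3 1 isT.
Definition bd3 : 'I_3 := @Ordinal 3 2 isT.

Definition edist (a b : pt) : R :=
  Num.sqrt ((a.1 - b.1) ^+ 2 + (a.2 - b.2) ^+ 2).

Definition in_chi (c : 'I_3 -> pt) : Prop :=
  \sum_(i < 3) (c i).1 = 0 /\ \sum_(i < 3) (c i).2 = 0.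

Definition in_QS4 (c : 'I_3 -> pt) : Prop :=
  exists a2 : R, 0 <= a2 /\
    c bd1 = (- a2, 0) /\ c bd2 = (- a2, 0) /\ c bd3 = (2 * a2, 0).

Definition in_QE1 (c : 'I_3 -> pt) : Prop :=
  exists b1 b2 : R,
    c bd1 = (0, - (2 * b1)) /\ c bd2 = (- b2, b1) /\ c bd3 = (b2, b1).

(* f is in H^1([0,1]) with weak derivative g: f is absolutely continuous
   on [0,1] with derivative g in L^2([0,1]) *)
Definition H1fun (f g : R -> R) : Prop :=
  measurable_fun (`[0, 1]%classic : set R) g /\
  (@lebesgue_measure R).-integrable (`[0, 1]%classic : set R) (EFin \o g) /\
  (@lebesgue_measure R).-integrable (`[0, 1]%classic : set R)
      (EFin \o (fun t => g t ^+ 2)) /\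
  forall t : R, 0 <= t <= 1 ->
    f t = f 0 + fine (\int[@lebesgue_measure R]_(s in (`[0, t]%classic : set R)) (g s)%:E).

Definition H1path (q w : 'I_3 -> R -> pt) : Prop :=
  forall i : 'I_3, H1fun (fun t => (q i t).1) (fun t => (w i t).1) /\
                   H1fun (fun t => (q i t).2) (fun t => (w i t).2).

Definition pot (a b : pt) : \bar R :=
  if edist a b == 0 then +oo%E else ((edist a b)^-1)%:E.

Definition lagrangian (q w : 'I_3 -> R -> pt) (t : R) : \bar R :=
  ((2^-1 * \sum_(i < 3) ((w i t).1 ^+ 2 + (w i t).2 ^+ 2))%:E +
   \sum_(i < 3) \sum_(j < 3 | (i < j)%N) pot (q i t) (q j t))%E.

Definition action (q w : 'I_3 -> R -> pt) : \bar R :=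
  \int[@lebesgue_measure R]_(t in (`[0, 1]%classic : set R)) lagrangian q w t.

Definition admissible (q w : 'I_3 -> R -> pt) : Prop :=
  H1path q w /\ (forall t : R, 0 <= t <= 1 -> in_chi (fun i => q i t)) /\
  in_QS4 (fun i => q i 0) /\ in_QE1 (fun i => q i 1).

Definition is_minimizer (q : 'I_3 -> R -> pt) : Prop :=
  exists w, admissible q w /\
    forall q' w', admissible q' w' -> (action q w <= action q' w')%E.

Definition collision_free (q : 'I_3 -> R -> pt) : Prop :=
  forall t : R, 0 < t <= 1 -> forall i j : 'I_3, i != j -> q i t != q j t.

(* derivative of f at t relative to the time interval [0,1]
   (one-sided at the endpoint t = 1) *)
Definition derivW (f : R -> R) (t l : R) : Prop :=
  (fun h : R => h^-1 * (f (t + h) - f t)) @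
     within (fun h : R => h != 0 /\ 0 <= t + h <= 1) (nbhs (0 : R)) --> l.

Definition force (c : 'I_3 -> pt) (i : 'I_3) : pt :=
  (\sum_(j < 3 | j != i) ((c j).1 - (c i).1) / edist (c j) (c i) ^+ 3,
   \sum_(j < 3 | j != i) ((c j).2 - (c i).2) / edist (c j) (c i) ^+ 3).

Definition newton (q : 'I_3 -> R -> pt) : Prop :=
  exists v : 'I_3 -> R -> pt, forall t : R, 0 < t <= 1 -> forall i : 'I_3,
    derivW (fun s => (q i s).1) t (v i t).1 /\
    derivW (fun s => (q i s).2) t (v i t).2 /\
    derivW (fun s => (v i s).1) t (force (fun j => q j t) i).1 /\
    derivW (fun s => (v i s).2) t (force (fun j => q j t) i).2.

Definition Z1 (q : 'I_3 -> R -> pt) (t : R) : pt :=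
  ((q bd1 t).1 - (q bd2 t).1, (q bd1 t).2 - (q bd2 t).2).
Definition Z2 (q : 'I_3 -> R -> pt) (t : R) : pt :=
  ((q bd3 t).1 - ((q bd1 t).1 + (q bd2 t).1) / 2,
   (q bd3 t).2 - ((q bd1 t).2 + (q bd2 t).2) / 2).

Definition tangent_x (Z : R -> pt) (t0 : R) : Prop :=
  (Z t0).2 = 0 /\ derivW (fun t => (Z t).2) t0 0.
Definition tangent_y (Z : R -> pt) (t0 : R) : Prop :=
  (Z t0).1 = 0 /\ derivW (fun t => (Z t).1) t0 0.

Definition stays_on_axes (Z : R -> pt) (t0 : R) : Prop :=
  (tangent_x Z t0 -> forall t : R, 0 < t <= 1 -> (Z t).2 = 0) /\
  (tangent_y Z t0 -> forall t : R, 0 < t <= 1 -> (Z t).1 = 0).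

End ThreeBody.

From Pilot Require Import Defs.
From HB Require Import structures.
From mathcomp Require Import all_boot all_order all_algebra.
From mathcomp Require Import all_classical all_reals all_analysis.
From mathcomp Require Import ring lra.
Set Implicit Arguments. Unset Strict Implicit. Unset Printing Implicit Defensive.
Import Order.TTheory GRing.Theory Num.Theory.
Import numFieldNormedType.Exports.
Local Open Scope classical_set_scope.
Local Open Scope ring_scope.

(* The configurations whose Jacobi vectors Z1, Z2 lie on prescribed axes are
   exactly the fixed points of a symmetry of the three-body problem: the
   reflection across the axis of Z2, composed with the exchange of bodies 1
   and 2 when Z1 and Z2 lie on different axes.  Tangency at t0 (together with
   q1 + q2 + q3 = 0) means that the position and the velocity of q at t0 are
   fixed by this symmetry, so q and its reflection are two solutions of
   Newton's equations with the same data at t0.  Since the force is locally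
   Lipschitz away from collisions, Gronwall's inequality applied to the squared
   distance in phase space shows that collision-free solutions are determined
   by their data at one time; hence q equals its reflection on (0, 1], which
   keeps Z1 and Z2 on their axes. *)

Lemma ler_sumr_term (R : numDomainType) (I : finType) (P : pred I) (F : I -> R) (k : I) :
  P k -> (forall l, P l -> 0 <= F l) -> F k <= \sum_(l | P l) F l.
Proof.
move=> Pk F0; rewrite (bigD1 k) //= lerDl sumr_ge0 // => l /andP[Pl _].
exact: F0.
Qed.

Section PlanarInequalities.
Variable R : rcfType.

Lemma sqr_add_le (u w : R) : (u + w) ^+ 2 <= 2 * u ^+ 2 + 2 * w ^+ 2.
Proof. have := sqr_ge0 (u - w); nra. Qed.

Lemma sqr_sub_le (u w : R) : (u - w) ^+ 2 <= 2 * u ^+ 2 + 2 * w ^+ 2.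
Proof. by rewrite -(sqrrN w); apply: sqr_add_le. Qed.

Lemma sqr_add3_le (a b c : R) : (a + b + c) ^+ 2 <= 3 * (a ^+ 2 + b ^+ 2 + c ^+ 2).
Proof.
have := sqr_ge0 (a - b); have := sqr_ge0 (b - c); have := sqr_ge0 (a - c); nra.
Qed.

Lemma sqr_sqrt_sub_le (x1 x2 y1 y2 : R) :
  (Num.sqrt (y1 ^+ 2 + y2 ^+ 2) - Num.sqrt (x1 ^+ 2 + x2 ^+ 2)) ^+ 2
  <= (x1 - y1) ^+ 2 + (x2 - y2) ^+ 2.
Proof.
set r := Num.sqrt (x1 ^+ 2 + x2 ^+ 2); set s := Num.sqrt (y1 ^+ 2 + y2 ^+ 2).
have r0 : 0 <= r by apply: sqrtr_ge0.
have s0 : 0 <= s by apply: sqrtr_ge0.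
have r2 : r ^+ 2 = x1 ^+ 2 + x2 ^+ 2 by rewrite sqr_sqrtr // ?addr_ge0 ?sqr_ge0.
have s2 : s ^+ 2 = y1 ^+ 2 + y2 ^+ 2 by rewrite sqr_sqrtr // ?addr_ge0 ?sqr_ge0.
have cauchy_schwarz : x1 * y1 + x2 * y2 <= r * s.
  have rs0 := mulr_ge0 r0 s0.
  have [dot0|] := lerP 0 (x1 * y1 + x2 * y2); last by lra.
  rewrite -(ler_pXn2r (n := 2)) ?nnegrE // exprMn r2 s2 -subr_ge0.
  have -> : (x1 ^+ 2 + x2 ^+ 2) * (y1 ^+ 2 + y2 ^+ 2) - (x1 * y1 + x2 * y2) ^+ 2
    = (x1 * y2 - x2 * y1) ^+ 2 by ring.
  exact: sqr_ge0.
have -> : (s - r) ^+ 2 = s ^+ 2 + r ^+ 2 - 2 * (r * s) by ring.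
rewrite r2 s2; nra.
Qed.

Lemma sqr_cube_diff_factor_le (p s G : R) : 0 < p -> 0 < s ->
  p ^+ 2 <= G -> s ^+ 2 <= G -> (p ^+ 3 + p ^+ 2 * s + p * s ^+ 2) ^+ 2 <= 9 * G ^+ 3.
Proof.
move=> p0 s0 pG sG.
have p2 : 0 <= p ^+ 2 by apply: sqr_ge0.
have s2 : 0 <= s ^+ 2 by apply: sqr_ge0.
have G0 : 0 <= G by apply: le_trans pG.
have pG2 : (p ^+ 2) ^+ 2 <= G ^+ 2 by rewrite lerXn2r ?nnegrE.
have sG2 : (s ^+ 2) ^+ 2 <= G ^+ 2 by rewrite lerXn2r ?nnegrE.
have h1 : (p ^+ 3) ^+ 2 <= G ^+ 3.
  by rewrite -exprM mulnC exprM lerXn2r ?nnegrE.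
have h2 : (p ^+ 2 * s) ^+ 2 <= G ^+ 3.
  by rewrite exprMn [G ^+ 3]exprSr; apply: ler_pM; rewrite ?sqr_ge0.
have h3 : (p * s ^+ 2) ^+ 2 <= G ^+ 3.
  by rewrite exprMn [G ^+ 3]exprS; apply: ler_pM; rewrite ?sqr_ge0.
apply: le_trans (sqr_add3_le _ _ _) _; lra.
Qed.

Lemma inv_cube_lipschitz (x1 x2 y1 y2 G : R) :
  0 < x1 ^+ 2 + x2 ^+ 2 -> 0 < y1 ^+ 2 + y2 ^+ 2 ->
  (x1 ^+ 2 + x2 ^+ 2)^-1 <= G -> (y1 ^+ 2 + y2 ^+ 2)^-1 <= G ->
  (x1 / Num.sqrt (x1 ^+ 2 + x2 ^+ 2) ^+ 3 - y1 / Num.sqrt (y1 ^+ 2 + y2 ^+ 2) ^+ 3) ^+ 2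
  + (x2 / Num.sqrt (x1 ^+ 2 + x2 ^+ 2) ^+ 3 - y2 / Num.sqrt (y1 ^+ 2 + y2 ^+ 2) ^+ 3) ^+ 2
  <= 32 * G ^+ 3 * ((x1 - y1) ^+ 2 + (x2 - y2) ^+ 2).
Proof.
have := sqr_sqrt_sub_le x1 x2 y1 y2.
set X := x1 ^+ 2 + x2 ^+ 2; set Y := y1 ^+ 2 + y2 ^+ 2.
set d := (x1 - y1) ^+ 2 + (x2 - y2) ^+ 2 => rs_d X0 Y0 XG YG.
set r := Num.sqrt X in rs_d *; set s := Num.sqrt Y in rs_d *.
have r0 : 0 < r by rewrite sqrtr_gt0.
have s0 : 0 < s by rewrite sqrtr_gt0.
have r2 : r ^+ 2 = X by rewrite sqr_sqrtr // ltW.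
have s2 : s ^+ 2 = Y by rewrite sqr_sqrtr // ltW.
have ri0 : 0 < r^-1 by rewrite invr_gt0.
have si0 : 0 < s^-1 by rewrite invr_gt0.
have riG : r^-1 ^+ 2 <= G by rewrite exprVn r2.
have siG : s^-1 ^+ 2 <= G by rewrite exprVn s2.
have G0 : 0 <= G by apply: le_trans riG; apply: sqr_ge0.
have K := sqr_cube_diff_factor_le ri0 si0 riG siG.
set K0 := _ + _ + _ in K.
set A := r^-1 ^+ 3; set B := s^-1 ^+ 3.
rewrite -[r ^+ 3]invrK -[s ^+ 3]invrK -!exprVn -/A -/B !invrK.
(* r^-3 - s^-3 = (s - r) (r^-2 + r^-1 s^-1 + s^-2) / (r s) *)
have AB : (A - B) * s = (s - r) * K0 by rewrite /A /B /K0; field; rewrite !gt_eqF.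
have split_diff a b : a * A - b * B = (a - b) * A + b * (A - B) by ring.
rewrite !split_diff.
have A2 : A ^+ 2 <= G ^+ 3.
  by rewrite /A -exprM mulnC exprM lerXn2r ?nnegrE ?sqr_ge0.
have B2 : (A - B) ^+ 2 * Y <= 9 * G ^+ 3 * d.
  rewrite -s2 -exprMn AB exprMn mulrC.
  by apply: ler_pM; rewrite ?sqr_ge0.
have := sqr_add_le ((x1 - y1) * A) (y1 * (A - B)).
have := sqr_add_le ((x2 - y2) * A) (y2 * (A - B)).
have d0 : 0 <= d by rewrite addr_ge0 ?sqr_ge0.
have := ler_wpM2r d0 A2; have := mulr_ge0 (exprn_ge0 3 G0) d0.
have E : 2 * ((x1 - y1) * A) ^+ 2 + 2 * (y1 * (A - B)) ^+ 2
        + (2 * ((x2 - y2) * A) ^+ 2 + 2 * (y2 * (A - B)) ^+ 2)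
        = 2 * (A ^+ 2 * d) + 2 * ((A - B) ^+ 2 * Y) by rewrite /d /Y; ring.
lra.
Qed.

End PlanarInequalities.

Section TimeDerivative.
Variable R : realType.
Implicit Types (f g : R -> R) (t l : R).

Lemma derivWP f t l : derivW f t l <->
  forall e, 0 < e -> exists2 d : R, 0 < d & forall h, `|h| < d -> h != 0 ->
    0 <= t + h <= 1 -> `|l - h^-1 * (f (t + h) - f t)| < e.
Proof.
split=> [fl e e0 | fl].
  move/cvgrPdist_lt: fl => /(_ e e0); rewrite near_withinE => /nbhs_ballP[d d0 Hd].
  by exists d => // h hd h0 th; apply: Hd; rewrite /ball /= ?sub0r ?normrN.
rewrite /derivW; apply/cvgrPdist_lt => e e0; have [d d0 Hd] := fl e e0.
rewrite near_withinE; apply/nbhs_ballP; exists d => // h.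
rewrite /ball /= sub0r normrN => hd [h0 th].
exact: Hd.
Qed.

Lemma derivW_cvg_within (A : set R) f t l : A `<=` [set x | 0 <= x <= 1] ->
  derivW f t l -> f @ within A (nbhs t) --> f t.
Proof.
move=> A01 /derivWP fl; apply/cvgrPdist_lt => e e0.
have [d d0 Hd] := fl 1 ltr01.
have l1 : 0 < `|l| + 1 by rewrite ltr_pwDr.
rewrite near_withinE; apply/nbhs_ballP.
exists (Num.min d (e / (`|l| + 1))); first by rewrite /= lt_min d0 divr_gt0.
move=> x; rewrite /ball /= distrC lt_min => /andP[xd xe] /A01 x01.
have [->|xt] := eqVneq x t; first by rewrite subrr normr0.
have := Hd (x - t) xd; rewrite subr_eq0 addrC subrK => /(_ xt x01).
set k := (x - t)^-1 * _ => lk.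
have fxt : f t - f x = (t - x) * k.
  by rewrite /k; field; rewrite subr_eq0.
have kl : `|k| <= `|l| + 1.
  have -> : k = l - (l - k) by ring.
  by apply: le_trans (ler_normB _ _) _; rewrite lerD2l ltW.
rewrite fxt normrM distrC.
apply: le_lt_trans (ler_wpM2l (normr_ge0 _) kl) _.
by rewrite -ltr_pdivlMr.
Qed.

Lemma derivW_unique f t a b : 0 < t <= 1 -> derivW f t a -> derivW f t b -> a = b.
Proof.
move=> /andP[t0 t1] /derivWP fa /derivWP fb.
apply/eqP; rewrite -subr_eq0 -normr_le0; apply/ler_addgt0Pr => e e0; rewrite add0r.
have e2 : 0 < e / 2 by rewrite divr_gt0.
have [d1 d10 H1] := fa _ e2; have [d2 d20 H2] := fb _ e2.
set m := Num.min (Num.min d1 d2) t.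
have m0 : 0 < m by rewrite !lt_min d10 d20 t0.
(* step to the left, which stays in [0, 1] because m <= t *)
set h := - (m / 2).
have hm : `|h| < m by rewrite normrN ger0_norm ?divr_ge0 ?ltW // ltr_pdivrMr // ltr_pMr // ltr1n.
move: (hm); rewrite !lt_min => /andP[/andP[hd1 hd2] ht].
have h0 : h != 0 by rewrite oppr_eq0 gt_eqF // divr_gt0.
have th : 0 <= t + h <= 1.
  have hneg : h <= 0 by rewrite oppr_le0 divr_ge0 // ltW.
  have := ler_norm (- h); rewrite normrN => nh.
  by apply/andP; split; lra.
have := H1 h hd1 h0 th; have := H2 h hd2 h0 th.
set k := h^-1 * _ => Bk Ak.
have : `|a - b| <= `|a - k| + `|b - k|.
  have -> : a - b = (a - k) - (b - k) by ring.
  exact: ler_normB.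
lra.
Qed.

Lemma derivW_ext f g t l : (forall s, 0 <= s <= 1 -> f s = g s) -> 0 <= t <= 1 ->
  derivW f t l -> derivW g t l.
Proof.
move=> fg t01 /derivWP fl; apply/derivWP => e e0.
have [d d0 Hd] := fl e e0; exists d => // h hd h0 th.
by rewrite -!fg //; apply: Hd.
Qed.

Lemma derivW_cst (c t : R) : derivW (fun _ => c) t 0.
Proof.
apply/derivWP => e e0; exists 1 => // h _ _ _.
by rewrite subrr mulr0 subr0 normr0.
Qed.

Lemma derivWZ f (k t a : R) : derivW f t a -> derivW (fun s => k * f s) t (k * a).
Proof.
move=> fa; rewrite /derivW.
have -> : (fun h => h^-1 * (k * f (t + h) - k * f t)) = (fun h => k * (h^-1 * (f (t + h) - f t))).
  by apply: funext => h; ring.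
exact: cvgMr.
Qed.

Lemma derivW_lincomb3 (f1 f2 f3 F : R -> R) (c1 c2 c3 a1 a2 a3 t l : R) :
  derivW f1 t a1 -> derivW f2 t a2 -> derivW f3 t a3 ->
  (forall s, F s = c1 * f1 s + c2 * f2 s + c3 * f3 s) ->
  l = c1 * a1 + c2 * a2 + c3 * a3 -> derivW F t l.
Proof.
move=> d1 d2 d3 FE ->; rewrite /derivW.
have -> : (fun h => h^-1 * (F (t + h) - F t)) = (fun h =>
    c1 * (h^-1 * (f1 (t + h) - f1 t)) + c2 * (h^-1 * (f2 (t + h) - f2 t))
    + c3 * (h^-1 * (f3 (t + h) - f3 t))).
  by apply: funext => h; rewrite !FE; ring.
by apply: cvgD; [apply: cvgD|]; apply: cvgMr.
Qed.

Lemma derivW_is_derive f t l : 0 < t < 1 -> derivW f t l -> is_derive t 1 f l.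
Proof.
move=> /andP[t0 t1] /derivWP fl.
have C : (fun h => h^-1 *: ((f \o shift t) (h *: 1) - f t)) @ 0^' --> l.
  apply/cvgrPdist_lt => e e0; have [d d0 Hd] := fl e e0.
  apply/nbhs_ballP; exists (Num.min d (Num.min t (1 - t))).
    by rewrite /= !lt_min d0 t0 subr_gt0 t1.
  move=> h; rewrite /ball /= sub0r normrN !lt_min => /andP[hd /andP[ht ht1]] h0.
  rewrite /shift /= [h *: 1]mulr1 (addrC h).
  apply: Hd => //; have := ler_norm h; have := ler_norm (- h); rewrite normrN.
  lra.
exact: (DeriveDef (cvgP _ C) (cvg_lim _ C)).
Qed.

End TimeDerivative.

Section Gronwall.
Variable R : realType.

Lemma expR_weighted_MVT (D dD : R -> R) (c u w : R) : u < w ->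
  (forall x, u < x < w -> is_derive x 1 D (dD x)) -> {within `[u, w], continuous D} ->
  exists2 x, u < x < w &
    D w * expR (c * w) - D u * expR (c * u) = (w - u) * (expR (c * x) * (dD x + c * D x)).
Proof.
move=> uw dD_D cD.
have dE x : x \in `]u, w[ ->
    is_derive x 1 (fun y => D y * expR (c * y)) (expR (c * x) * (dD x + c * D x)).
  rewrite in_itv /= => xuw.
  have dlin : is_derive x 1 (fun y => c * y) c.
    apply: is_derive_eq (is_deriveZ c (is_derive_id x 1)) _.
    by rewrite -[c *: (1 : R)]/(c * 1) mulr1.
  have dexp : is_derive x 1 (fun y => expR (c * y)) (expR (c * x) * c).
    exact: is_derive1_comp (is_derive_expR (c * x)) dlin.
  have := is_deriveM (dD_D x xuw) dexp.
  by move=> dprod; apply: is_derive_eq dprod _; rewrite /GRing.scale /=; ring.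
have cE : {within `[u, w], continuous (fun y => D y * expR (c * y))}.
  have cexp : {within `[u, w], continuous (fun y => expR (c * y))}.
    apply: continuous_subspaceT => y; apply: continuous_comp; last exact: continuous_expR.
    by apply: continuousM; [exact: cvg_cst | exact: cvg_id].
  by move=> x; exact: continuousM (cD x) (cexp x).
have [x + ->] := MVT uw dE cE; rewrite in_itv /= => xuw.
by exists x => //; rewrite mulrC.
Qed.

Lemma gronwall_eq0 (D dD : R -> R) (L a b t0 : R) :
  (forall x, a < x < b -> is_derive x 1 D (dD x)) -> {within `[a, b], continuous D} ->
  (forall x, a < x < b -> `|dD x| <= L * D x) -> (forall x, a <= x <= b -> 0 <= D x) ->
  a <= t0 <= b -> D t0 = 0 -> forall t, a <= t <= b -> D t = 0.
Proof.
move=> dD_D cD dD_le D_ge0 /andP[a_t0 t0_b] Dt0 t /andP[a_t t_b].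
have sub u w : a <= u -> w <= b -> `[u, w] `<=` `[a, b].
  move=> au wb x /=; rewrite !in_itv /= => /andP[ux xw].
  by rewrite (le_trans au ux) (le_trans xw wb).
have in_ab u w x : a <= u -> w <= b -> u < x < w -> a < x < b.
  by move=> au wb /andP[ux xw]; rewrite (le_lt_trans au ux) (lt_le_trans xw wb).
apply/eqP; rewrite eq_le D_ge0 ?a_t ?t_b // andbT.
have [|tt0|<-] := ltgtP t0 t; last by rewrite Dt0.
- move=> t0t; have [x /(in_ab _ _ _ a_t0 t_b) xab] := expR_weighted_MVT (- L) t0t
    (fun x xin => dD_D x (in_ab _ _ _ a_t0 t_b xin)) (continuous_subspaceW (sub _ _ a_t0 t_b) cD).
  rewrite Dt0 mul0r subr0 => E.
  have : D t * expR (- L * t) <= 0.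
    rewrite E; apply: mulr_ge0_le0; first by rewrite subr_ge0 ltW.
    apply: mulr_ge0_le0; first exact: ltW (expR_gt0 _).
    have := dD_le x xab; have := ler_norm (dD x); lra.
  by rewrite pmulr_lle0 ?expR_gt0.
- have [x /(in_ab _ _ _ a_t t0_b) xab] := expR_weighted_MVT L tt0
    (fun x xin => dD_D x (in_ab _ _ _ a_t t0_b xin)) (continuous_subspaceW (sub _ _ a_t t0_b) cD).
  rewrite Dt0 mul0r sub0r => E.
  have : 0 <= - (D t * expR (L * t)).
    rewrite E; apply: mulr_ge0; first by rewrite subr_ge0 ltW.
    apply: mulr_ge0; first exact: ltW (expR_gt0 _).
    have := dD_le x xab; have := ler_norm (- dD x); rewrite normrN; lra.
  by rewrite oppr_ge0 pmulr_lle0 ?expR_gt0.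
Qed.

End Gronwall.

Section Configurations.
Variable R : realType.
Implicit Types (a b : pt R) (c : 'I_3 -> pt R).

Lemma ord3P (i : 'I_3) : [\/ i = bd1, i = bd2 | i = bd3].
Proof.
by case: i => -[|[|[|//]]] Hn; [constructor 1 | constructor 2 | constructor 3]; apply: val_inj.
Qed.

Lemma big_ord3 (F : 'I_3 -> R) : \sum_(i < 3) F i = F bd1 + F bd2 + F bd3.
Proof. by rewrite !big_ord_recl big_ord0 addr0 addrA; congr (F _ + F _ + F _); apply: val_inj. Qed.

Definition sqdist a b : R := (a.1 - b.1) ^+ 2 + (a.2 - b.2) ^+ 2.

Lemma sqdist_ge0 a b : 0 <= sqdist a b.
Proof. by rewrite addr_ge0 ?sqr_ge0. Qed.

Lemma sqdist_eq0 a b : sqdist a b = 0 -> a = b.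
Proof.
move=> /eqP; rewrite paddr_eq0 ?sqr_ge0 // !sqrf_eq0 !subr_eq0 => /andP[/eqP e1 /eqP e2].
by case: a b e1 e2 => [? ?] [? ?] /= -> ->.
Qed.

Lemma sqdist_gt0 a b : a != b -> 0 < sqdist a b.
Proof. by move=> ab; rewrite lt_def sqdist_ge0 andbT; apply: contra ab => /eqP/sqdist_eq0->. Qed.

Lemma sqdist_add_le a b a' b' :
  sqdist (a.1 + b.1, a.2 + b.2) (a'.1 + b'.1, a'.2 + b'.2) <= 2 * sqdist a a' + 2 * sqdist b b'.
Proof.
rewrite /sqdist /=.
have -> : a.1 + b.1 - (a'.1 + b'.1) = (a.1 - a'.1) + (b.1 - b'.1) by ring.
have -> : a.2 + b.2 - (a'.2 + b'.2) = (a.2 - a'.2) + (b.2 - b'.2) by ring.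
have := sqr_add_le (a.1 - a'.1) (b.1 - b'.1); have := sqr_add_le (a.2 - a'.2) (b.2 - b'.2).
lra.
Qed.

Definition attr c (i j : 'I_3) : pt R :=
  (((c j).1 - (c i).1) / Defs.edist (c j) (c i) ^+ 3,
   ((c j).2 - (c i).2) / Defs.edist (c j) (c i) ^+ 3).
Arguments attr : simpl never.

Lemma force_bd1 c : force c bd1 =
  ((attr c bd1 bd2).1 + (attr c bd1 bd3).1, (attr c bd1 bd2).2 + (attr c bd1 bd3).2).
Proof. by rewrite /force; congr pair; rewrite big_mkcond big_ord3 /= ?add0r ?addr0. Qed.

Lemma force_bd2 c : force c bd2 =
  ((attr c bd2 bd1).1 + (attr c bd2 bd3).1, (attr c bd2 bd1).2 + (attr c bd2 bd3).2).
Proof. by rewrite /force; congr pair; rewrite big_mkcond big_ord3 /= ?add0r ?addr0. Qed.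

Lemma force_bd3 c : force c bd3 =
  ((attr c bd3 bd1).1 + (attr c bd3 bd2).1, (attr c bd3 bd1).2 + (attr c bd3 bd2).2).
Proof. by rewrite /force; congr pair; rewrite big_mkcond big_ord3 /= ?add0r ?addr0. Qed.

Definition separated c (G : R) :=
  forall i j : 'I_3, i != j -> 0 < sqdist (c j) (c i) /\ (sqdist (c j) (c i))^-1 <= G.

Lemma separated_ge0 c G : separated c G -> 0 <= G.
Proof. by move=> /(_ bd1 bd2 isT)[d0 dG]; apply: le_trans dG; rewrite invr_ge0 ltW. Qed.

Lemma attr_lipschitz c c' G (i j : 'I_3) : i != j -> separated c G -> separated c' G ->
  sqdist (attr c i j) (attr c' i j)
  <= 64 * G ^+ 3 * (sqdist (c i) (c' i) + sqdist (c j) (c' j)).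
Proof.
move=> ij sc /[dup] /separated_ge0 G0 sc'.
have [X0 XG] := sc i j ij; have [Y0 YG] := sc' i j ij.
apply: le_trans (inv_cube_lipschitz X0 Y0 XG YG) _.
have -> : 64 * G ^+ 3 * (sqdist (c i) (c' i) + sqdist (c j) (c' j))
  = 32 * G ^+ 3 * (2 * (sqdist (c i) (c' i) + sqdist (c j) (c' j))) by ring.
apply: ler_wpM2l; first by rewrite mulr_ge0 ?exprn_ge0.
rewrite /sqdist.
have sub_le (x x' y y' : R) : (x - y - (x' - y')) ^+ 2 <= 2 * (x - x') ^+ 2 + 2 * (y - y') ^+ 2.
  have -> : x - y - (x' - y') = x - x' - (y - y') by ring.
  exact: sqr_sub_le.
have := sub_le (c j).1 (c' j).1 (c i).1 (c' i).1.
have := sub_le (c j).2 (c' j).2 (c i).2 (c' i).2.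
lra.
Qed.

Definition conf_sqdist c c' : R := \sum_(i < 3) sqdist (c i) (c' i).

Lemma conf_sqdist_ge0 c c' : 0 <= conf_sqdist c c'.
Proof. by rewrite sumr_ge0 // => i _; apply: sqdist_ge0. Qed.

Lemma force_lipschitz c c' G : separated c G -> separated c' G ->
  conf_sqdist (force c) (force c') <= 512 * G ^+ 3 * conf_sqdist c c'.
Proof.
move=> sc sc'.
have body (i j k : 'I_3) : i != j -> i != k ->
    (forall c, force c i = ((attr c i j).1 + (attr c i k).1, (attr c i j).2 + (attr c i k).2)) ->
    sqdist (force c i) (force c' i) <=
    128 * G ^+ 3 * (2 * sqdist (c i) (c' i) + sqdist (c j) (c' j) + sqdist (c k) (c' k)).
  move=> ij ik fE; rewrite !fE; apply: le_trans (sqdist_add_le _ _ _ _) _.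
  have := attr_lipschitz ij sc sc'; have := attr_lipschitz ik sc sc'.
  have -> : 128 * G ^+ 3 * (2 * sqdist (c i) (c' i) + sqdist (c j) (c' j) + sqdist (c k) (c' k))
    = 2 * (64 * G ^+ 3 * (sqdist (c i) (c' i) + sqdist (c j) (c' j)))
      + 2 * (64 * G ^+ 3 * (sqdist (c i) (c' i) + sqdist (c k) (c' k))) by ring.
  lra.
have := body bd1 bd2 bd3 isT isT force_bd1.
have := body bd2 bd1 bd3 isT isT force_bd2.
have := body bd3 bd1 bd2 isT isT force_bd3.
rewrite /conf_sqdist !big_ord3.
set Q1 := sqdist (c bd1) _; set Q2 := sqdist (c bd2) _; set Q3 := sqdist (c bd3) _.
have -> : 512 * G ^+ 3 * (Q1 + Q2 + Q3) = 128 * G ^+ 3 * (2 * Q1 + Q2 + Q3)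
  + 128 * G ^+ 3 * (2 * Q2 + Q1 + Q3) + 128 * G ^+ 3 * (2 * Q3 + Q1 + Q2) by ring.
lra.
Qed.

End Configurations.

Section NewtonUniqueness.
Variable R : realType.
Implicit Types (a b u w f g : pt R) (q v : 'I_3 -> R -> pt R).

(* newton q unfolds to exists v, newton_with q v *)
Definition newton_with q v : Prop := forall t : R, 0 < t <= 1 -> forall i : 'I_3,
  derivW (fun s => (q i s).1) t (v i t).1 /\
  derivW (fun s => (q i s).2) t (v i t).2 /\
  derivW (fun s => (v i s).1) t (force (fun j => q j t) i).1 /\
  derivW (fun s => (v i s).2) t (force (fun j => q j t) i).2.

(* time derivative of sqdist a b when a and b move with velocities u and w *)
Definition sqdist_rate a b u w : R :=
  2 * ((a.1 - b.1) * (u.1 - w.1) + (a.2 - b.2) * (u.2 - w.2)).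

Lemma sqdist_rate_le a b u w f g :
  `|sqdist_rate a b u w + sqdist_rate u w f g|
  <= sqdist a b + 2 * sqdist u w + sqdist f g.
Proof.
rewrite /sqdist_rate /sqdist ler_norml; apply/andP; split.
  have := sqr_ge0 (a.1 - b.1 + (u.1 - w.1)); have := sqr_ge0 (a.2 - b.2 + (u.2 - w.2)).
  have := sqr_ge0 (u.1 - w.1 + (f.1 - g.1)); have := sqr_ge0 (u.2 - w.2 + (f.2 - g.2)).
  rewrite !sqrrD; lra.
have := sqr_ge0 (a.1 - b.1 - (u.1 - w.1)); have := sqr_ge0 (a.2 - b.2 - (u.2 - w.2)).
have := sqr_ge0 (u.1 - w.1 - (f.1 - g.1)); have := sqr_ge0 (u.2 - w.2 - (f.2 - g.2)).
rewrite !sqrrB; lra.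
Qed.

Lemma is_derive_sqdist (p p' : R -> pt R) u w (x : R) :
  is_derive x 1 (fun s => (p s).1) u.1 -> is_derive x 1 (fun s => (p s).2) u.2 ->
  is_derive x 1 (fun s => (p' s).1) w.1 -> is_derive x 1 (fun s => (p' s).2) w.2 ->
  is_derive x 1 (fun s => sqdist (p s) (p' s)) (sqdist_rate (p x) (p' x) u w).
Proof.
have sqr_diff (g g' : R -> R) (d d' : R) : is_derive x 1 g d -> is_derive x 1 g' d' ->
    is_derive x 1 (fun s => (g s - g' s) ^+ 2) (2 * (g x - g' x) * (d - d')).
  move=> gd gd'; have := is_deriveM (is_deriveB gd gd') (is_deriveB gd gd').
  have -> : (fun s => (g s - g' s) ^+ 2) = (fun s => (g s - g' s) * (g s - g' s)).
    by apply: funext => s; rewrite expr2.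
  move=> dsq; apply: is_derive_eq dsq _.
  by rewrite -[(g - g') x]/(g x - g' x) -[_ *: (d - d')]/((g x - g' x) * (d - d')); ring.
move=> p1 p2 p1' p2'; have := is_deriveD (sqr_diff _ _ _ _ p1 p1') (sqr_diff _ _ _ _ p2 p2').
by move=> dsum; apply: is_derive_eq dsum _; rewrite /sqdist_rate; ring.
Qed.

Lemma sqdist_cvg T (F : set_system T) (FF : Filter F) (p p' : T -> pt R) a b :
  (fun s => (p s).1) @ F --> a.1 -> (fun s => (p s).2) @ F --> a.2 ->
  (fun s => (p' s).1) @ F --> b.1 -> (fun s => (p' s).2) @ F --> b.2 ->
  (fun s => sqdist (p s) (p' s)) @ F --> sqdist a b.
Proof.
move=> p1 p2 p1' p2'; rewrite /sqdist.
under eq_cvg do rewrite !expr2.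
by rewrite !expr2; apply: cvgD; apply: cvgM; apply: cvgB.
Qed.

Lemma newton_cvg_within q v (A : set R) (x : R) (i : 'I_3) :
  newton_with q v -> A `<=` [set y | 0 <= y <= 1] -> 0 < x <= 1 ->
  let W := within A (nbhs x) in
  [/\ (fun s => (q i s).1) @ W --> (q i x).1, (fun s => (q i s).2) @ W --> (q i x).2,
      (fun s => (v i s).1) @ W --> (v i x).1 & (fun s => (v i s).2) @ W --> (v i x).2].
Proof.
move=> qv A01 x01 W; have [q1 [q2 [v1 v2]]] := qv x x01 i.
by split; apply: derivW_cvg_within A01 _; eassumption.
Qed.

Lemma separated_le c (G G' : R) : G <= G' -> separated c G -> separated c G'.
Proof. by move=> GG' sc i j ij; have [d0 dG] := sc i j ij; split; last exact: le_trans GG'. Qed.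

Lemma newton_separated q v (a : R) : newton_with q v -> collision_free q -> 0 < a ->
  exists G, forall y, a <= y <= 1 -> separated (fun j => q j y) G.
Proof.
move=> qv cq a0.
have [a1|a1] := leP a 1; last first.
  by exists 0 => y /andP[ay y1]; have := lt_le_trans a1 (le_trans ay y1); rewrite ltxx.
have ay01 y : a <= y <= 1 -> 0 < y <= 1 by case/andP=> ay ->; rewrite (lt_le_trans a0 ay).
have dist_gt0 y (i j : 'I_3) : a <= y <= 1 -> i != j -> 0 < sqdist (q j y) (q i y).
  by move=> /ay01 y01 ij; apply: sqdist_gt0; rewrite cq // eq_sym.
pose g y := \sum_(i < 3) \sum_(j < 3 | j != i) (sqdist (q j y) (q i y))^-1.
have cg : {within `[a, 1], continuous g}.
  apply/subspace_continuousP => x; rewrite /= in_itv /= => xa1.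
  have A01 : `[a, 1] `<=` [set y | 0 <= y <= 1].
    by move=> y; rewrite /= in_itv /= => /andP[ay ->]; rewrite (le_trans (ltW a0) ay).
  apply: cvg_big => [|i _]; first exact: add_continuous.
  apply: cvg_big => [|j ij]; first exact: add_continuous.
  apply: cvgV; first by rewrite gt_eqF // dist_gt0 // eq_sym.
  have [qi1 qi2 _ _] := newton_cvg_within i qv A01 (ay01 _ xa1).
  have [qj1 qj2 _ _] := newton_cvg_within j qv A01 (ay01 _ xa1).
  exact: sqdist_cvg.
have [c _ gc] := EVT_max a1 cg.
exists (g c) => y ya1 i j ij; split; first exact: dist_gt0.
apply: le_trans (gc y _); last by rewrite in_itv.
have term_ge0 (k l : 'I_3) : l != k -> 0 <= (sqdist (q l y) (q k y))^-1.
  by move=> lk; rewrite invr_ge0 ltW // dist_gt0 // eq_sym.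
apply: le_trans (ler_sumr_term (P := xpredT) (k := i) _ _); rewrite //=.
  by apply: ler_sumr_term; rewrite 1?eq_sym // => l; apply: term_ge0.
by move=> k _; rewrite sumr_ge0 // => l; apply: term_ge0.
Qed.

Section Gap.
Variables q v q' v' : 'I_3 -> R -> pt R.
Hypotheses (qv : newton_with q v) (qv' : newton_with q' v').

Definition gap (s : R) : R :=
  \sum_(i < 3) (sqdist (q i s) (q' i s) + sqdist (v i s) (v' i s)).

Definition gap_rate (s : R) : R :=
  \sum_(i < 3) (sqdist_rate (q i s) (q' i s) (v i s) (v' i s) +
    sqdist_rate (v i s) (v' i s) (force (fun j => q j s) i) (force (fun j => q' j s) i)).

Lemma gap_ge0 (s : R) : 0 <= gap s.
Proof. by rewrite sumr_ge0 // => i _; rewrite addr_ge0 ?sqdist_ge0. Qed.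

Lemma gap_eq0 (s : R) : gap s = 0 -> forall i, q i s = q' i s.
Proof.
move=> /psumr_eq0P gap0 i.
have /eqP := gap0 (fun i _ => addr_ge0 (sqdist_ge0 _ _) (sqdist_ge0 _ _)) i isT.
by rewrite paddr_eq0 ?sqdist_ge0 // => /andP[/eqP/sqdist_eq0].
Qed.

Lemma is_derive_gap (x : R) : 0 < x < 1 -> is_derive x 1 gap (gap_rate x).
Proof.
move=> x01; have x01' : 0 < x <= 1 by case/andP: x01 => -> /ltW ->.
pose h i s := sqdist (q i s) (q' i s) + sqdist (v i s) (v' i s).
have dh i : is_derive x 1 (h i)
    (sqdist_rate (q i x) (q' i x) (v i x) (v' i x) +
     sqdist_rate (v i x) (v' i x) (force (fun j => q j x) i) (force (fun j => q' j x) i)).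
  have [q1 [q2 [v1 v2]]] := qv x01' i; have [q1' [q2' [v1' v2']]] := qv' x01' i.
  have D (F : R -> R) (l : R) : derivW F x l -> is_derive x 1 F l by apply: derivW_is_derive.
  exact: is_deriveD (is_derive_sqdist (D _ _ q1) (D _ _ q2) (D _ _ q1') (D _ _ q2'))
    (is_derive_sqdist (D _ _ v1) (D _ _ v2) (D _ _ v1') (D _ _ v2')).
have -> : gap = \sum_(i < 3) h i by apply: funext => s; rewrite fct_sumE.
exact: is_derive_sum.
Qed.

Lemma gap_rate_le (s G : R) : separated (fun j => q j s) G -> separated (fun j => q' j s) G ->
  `|gap_rate s| <= (2 + 512 * G ^+ 3) * gap s.
Proof.
move=> sep sep'; have G0 := separated_ge0 sep.
have := force_lipschitz sep sep'.
have -> : gap s = conf_sqdist (fun j => q j s) (fun j => q' j s)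
                + conf_sqdist (fun j => v j s) (fun j => v' j s) by rewrite -big_split.
have rate_le : `|gap_rate s| <= conf_sqdist (fun j => q j s) (fun j => q' j s)
    + 2 * conf_sqdist (fun j => v j s) (fun j => v' j s)
    + conf_sqdist (force (fun j => q j s)) (force (fun j => q' j s)).
  rewrite /conf_sqdist mulr_sumr -!big_split /=.
  by apply: le_trans (ler_norm_sum _ _ _) _; apply: ler_sum => i _; apply: sqdist_rate_le.
have := conf_sqdist_ge0 (fun j => q j s) (fun j => q' j s).
have := conf_sqdist_ge0 (fun j => v j s) (fun j => v' j s).
have : 0 <= 512 * G ^+ 3 by rewrite mulr_ge0 ?exprn_ge0.
move: rate_le; set K := 512 * G ^+ 3; nra.
Qed.

Lemma gap_continuous (a : R) : 0 < a -> {within `[a, 1], continuous gap}.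
Proof.
move=> a0; apply/subspace_continuousP => x; rewrite /= in_itv /= => /andP[ax x1].
have x01 : 0 < x <= 1 by rewrite (lt_le_trans a0 ax) x1.
have A01 : `[a, 1] `<=` [set y | 0 <= y <= 1].
  by move=> y; rewrite /= in_itv /= => /andP[ay ->]; rewrite (le_trans (ltW a0) ay).
apply: cvg_big => [|i _]; first exact: add_continuous.
have [q1 q2 v1 v2] := newton_cvg_within i qv A01 x01.
have [q1' q2' v1' v2'] := newton_cvg_within i qv' A01 x01.
by apply: cvgD; apply: sqdist_cvg.
Qed.

End Gap.

Theorem newton_unique q v q' v' (t0 : R) :
  newton_with q v -> newton_with q' v' -> collision_free q -> collision_free q' ->
  0 < t0 <= 1 -> (forall i, q i t0 = q' i t0 /\ v i t0 = v' i t0) ->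
  forall t, 0 < t <= 1 -> forall i, q i t = q' i t.
Proof.
move=> qv qv' cq cq' /andP[t00 t01] agree t /andP[t0' t1]; apply: gap_eq0.
set a := Num.min t t0.
have a0 : 0 < a by rewrite lt_min t0' t00.
have [G1 sep1] := newton_separated qv cq a0.
have [G2 sep2] := newton_separated qv' cq' a0.
set G := Num.max G1 G2.
have gap_t0 : gap q v q' v' t0 = 0.
  by apply: big1 => i _; have [-> ->] := agree i; rewrite /sqdist !subrr expr0n /= !addr0.
apply: (gronwall_eq0 (D := gap q v q' v') (dD := gap_rate q v q' v')
  (L := 2 + 512 * G ^+ 3) (a := a) (b := 1) (t0 := t0)) => //.
- by move=> x /andP[ax x1]; apply: (is_derive_gap qv qv'); rewrite (lt_trans a0 ax).
- exact (gap_continuous qv qv' a0).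
- move=> x /andP[ax x1]; have xa1 : a <= x <= 1 by rewrite !ltW.
  apply: gap_rate_le; [apply: separated_le (sep1 _ xa1) | apply: separated_le (sep2 _ xa1)];
  by rewrite le_max lexx ?orbT.
- by move=> x _; apply: gap_ge0.
- by rewrite ge_min lexx orbT.
- by rewrite ge_min lexx.
Qed.

End NewtonUniqueness.

Section Reflections.
Variable R : realType.
Implicit Types (p : pt R) (c : 'I_3 -> pt R) (q v : 'I_3 -> R -> pt R).

Lemma pt_eq p p' : p.1 = p'.1 -> p.2 = p'.2 -> p = p'.
Proof. by case: p p' => [? ?] [? ?] /= -> ->. Qed.

Definition axis_sign (b : bool) : R := if b then 1 else -1.

(* reflection across the x-axis (b = true) or the y-axis (b = false) *)
Definition axis_refl (b : bool) p : pt R := (axis_sign b * p.1, - axis_sign b * p.2).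

(* the coordinate vanishing on that axis *)
Definition normal_coord (b : bool) p : R := if b then p.2 else p.1.

Lemma axis_reflK b : involutive (axis_refl b).
Proof. by move=> p; case: b; apply: pt_eq; rewrite /=; ring. Qed.

Lemma axis_refl_fixed b p : axis_refl b p = p <-> normal_coord b p = 0.
Proof.
by case: b; case: p => x y; rewrite /axis_refl /normal_coord /=;
  split=> [[e1 e2]|e]; [lra | apply: pt_eq; rewrite /= ?e; ring
                       | lra | apply: pt_eq; rewrite /= ?e; ring].
Qed.

Lemma edist_axis_refl b p p' : Defs.edist (axis_refl b p) (axis_refl b p') = Defs.edist p p'.
Proof. by case: b; rewrite /Defs.edist /=; congr Num.sqrt; ring. Qed.

Definition swap12 (i : 'I_3) : 'I_3 := if i == bd1 then bd2 else if i == bd2 then bd1 else i.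

Definition relabel (sw : bool) (i : 'I_3) : 'I_3 := if sw then swap12 i else i.

Lemma relabelK sw : involutive (relabel sw).
Proof. by case: sw => // i; case: (ord3P i) => ->. Qed.

Definition refl_conf (b sw : bool) c : 'I_3 -> pt R := fun i => axis_refl b (c (relabel sw i)).

Definition refl_path (b sw : bool) q : 'I_3 -> R -> pt R :=
  fun i t => refl_conf b sw (fun j => q j t) i.

Lemma attr_refl b sw c (i j : 'I_3) :
  attr (refl_conf b sw c) i j = axis_refl b (attr c (relabel sw i) (relabel sw j)).
Proof. by rewrite /attr /refl_conf !edist_axis_refl; apply: pt_eq; rewrite /=; ring. Qed.

Lemma force_refl b sw c (i : 'I_3) :
  force (refl_conf b sw c) i = axis_refl b (force c (relabel sw i)).
Proof.
case: sw; case: (ord3P i) => ->;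
  rewrite /= ?force_bd1 ?force_bd2 ?force_bd3 !attr_refl;
  by apply: pt_eq; rewrite /=; ring.
Qed.

Lemma newton_refl b sw q v : newton_with q v -> newton_with (refl_path b sw q) (refl_path b sw v).
Proof.
move=> qv t t01 i; have [q1 [q2 [v1 v2]]] := qv t t01 (relabel sw i).
rewrite [force _ i]force_refl.
by split; [|split; [|split]]; apply: derivWZ.
Qed.

Lemma collision_free_refl b sw q : collision_free q -> collision_free (refl_path b sw q).
Proof.
move=> cq t t01 i j ij; rewrite /refl_path /refl_conf (inj_eq (can_inj (axis_reflK b))).
by apply: cq; rewrite // (inj_eq (can_inj (relabelK sw))).
Qed.

Lemma in_chi_refl b sw c : in_chi c -> in_chi (refl_conf b sw c).
Proof.
rewrite /in_chi !big_ord3 => -[s1 s2].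
by case: b; case: sw; rewrite /refl_conf /=; split; lra.
Qed.

(* Z1 q t is convertible to jac1 (fun i => q i t), and likewise for Z2 *)
Definition jac1 c : pt R := ((c bd1).1 - (c bd2).1, (c bd1).2 - (c bd2).2).
Definition jac2 c : pt R :=
  ((c bd3).1 - ((c bd1).1 + (c bd2).1) / 2, (c bd3).2 - ((c bd1).2 + (c bd2).2) / 2).

Lemma jac1_refl b sw c : jac1 (refl_conf b sw c) = axis_refl (sw (+) b) (jac1 c).
Proof. by case: b; case: sw; apply: pt_eq; rewrite /=; ring. Qed.

Lemma jac2_refl b sw c : jac2 (refl_conf b sw c) = axis_refl b (jac2 c).
Proof. by case: b; case: sw; apply: pt_eq; rewrite /=; ring. Qed.

Lemma conf_eq_jacobi c c' : in_chi c -> in_chi c' ->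
  jac1 c = jac1 c' -> jac2 c = jac2 c' -> forall i, c i = c' i.
Proof.
rewrite /in_chi !big_ord3 => -[s1 s2] [s1' s2'] [e11 e12] [e21 e22] i.
by case: (ord3P i) => ->; apply: pt_eq; lra.
Qed.

Lemma refl_conf_id b1 b2 c : in_chi c ->
  normal_coord b1 (jac1 c) = 0 -> normal_coord b2 (jac2 c) = 0 ->
  forall i, refl_conf b2 (b1 (+) b2) c i = c i.
Proof.
move=> chi n1 n2; apply: conf_eq_jacobi => //; first exact: in_chi_refl.
- by rewrite jac1_refl -addbA addbb addbF; apply/axis_refl_fixed.
- by rewrite jac2_refl; apply/axis_refl_fixed.
Qed.

End Reflections.

Section AxisInvariance.
Variable R : realType.
Implicit Types (q v : 'I_3 -> R -> pt R).

Definition tangent_to (b : bool) (Z : R -> pt R) (t0 : R) : Prop :=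
  if b then tangent_x Z t0 else tangent_y Z t0.

Lemma newton_lincomb q v (b : bool) (w1 w2 w3 t l : R) (F : R -> R) :
  newton_with q v -> 0 < t <= 1 ->
  (forall s, F s = w1 * normal_coord b (q bd1 s) + w2 * normal_coord b (q bd2 s)
                 + w3 * normal_coord b (q bd3 s)) ->
  derivW F t l ->
  l = w1 * normal_coord b (v bd1 t) + w2 * normal_coord b (v bd2 t)
      + w3 * normal_coord b (v bd3 t).
Proof.
move=> qv t01 FE dl.
have [q1 [q2 _]] := qv t t01 bd1; have [r1 [r2 _]] := qv t t01 bd2.
have [s1 [s2 _]] := qv t t01 bd3.
apply: derivW_unique t01 dl _.
by case: b FE => FE; [exact: derivW_lincomb3 q2 r2 s2 FE _ | exact: derivW_lincomb3 q1 r1 s1 FE _].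
Qed.

Lemma newton_in_chi q v (t : R) : newton_with q v ->
  (forall s, 0 <= s <= 1 -> in_chi (fun i => q i s)) -> 0 < t <= 1 -> in_chi (fun i => v i t).
Proof.
move=> qv chi t01; have t01' : 0 <= t <= 1 by case/andP: t01 => /ltW -> ->.
have sum0 b : derivW (fun s => \sum_(i < 3) normal_coord b (q i s)) t 0.
  apply: derivW_ext (derivW_cst 0 t) => // s s01.
  by have [c1 c2] := chi s s01; case: b.
rewrite /in_chi !big_ord3; split.
- by rewrite (newton_lincomb (b := false) (w1 := 1) (w2 := 1) (w3 := 1) qv t01 _ (sum0 false))
    ?mul1r // => s; rewrite big_ord3 !mul1r.
- by rewrite (newton_lincomb (b := true) (w1 := 1) (w2 := 1) (w3 := 1) qv t01 _ (sum0 true))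
    ?mul1r // => s; rewrite big_ord3 !mul1r.
Qed.

Lemma tangent_jac1 q v b (t0 : R) : newton_with q v -> 0 < t0 <= 1 ->
  tangent_to b (Z1 q) t0 ->
  normal_coord b (jac1 (fun i => q i t0)) = 0 /\ normal_coord b (jac1 (fun i => v i t0)) = 0.
Proof.
move=> qv t01 T; have [Z0 dZ] : normal_coord b (Z1 q t0) = 0 /\
    derivW (fun t => normal_coord b (Z1 q t)) t0 0 by case: b T.
split=> //; have FE s : normal_coord b (Z1 q s) = 1 * normal_coord b (q bd1 s)
    + -1 * normal_coord b (q bd2 s) + 0 * normal_coord b (q bd3 s).
  by case: b {T Z0 dZ}; rewrite /=; ring.
by have := newton_lincomb qv t01 FE dZ; case: b {T Z0 dZ FE} => /= E; lra.
Qed.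

Lemma tangent_jac2 q v b (t0 : R) : newton_with q v -> 0 < t0 <= 1 ->
  tangent_to b (Z2 q) t0 ->
  normal_coord b (jac2 (fun i => q i t0)) = 0 /\ normal_coord b (jac2 (fun i => v i t0)) = 0.
Proof.
move=> qv t01 T; have [Z0 dZ] : normal_coord b (Z2 q t0) = 0 /\
    derivW (fun t => normal_coord b (Z2 q t)) t0 0 by case: b T.
split=> //; have FE s : normal_coord b (Z2 q s) = - 2^-1 * normal_coord b (q bd1 s)
    + - 2^-1 * normal_coord b (q bd2 s) + 1 * normal_coord b (q bd3 s).
  by case: b {T Z0 dZ}; rewrite /=; ring.
by have := newton_lincomb qv t01 FE dZ; case: b {T Z0 dZ FE} => /= E; lra.
Qed.

Lemma tangent_axes_invariant q v b1 b2 (t0 : R) :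
  newton_with q v -> collision_free q -> (forall s, 0 <= s <= 1 -> in_chi (fun i => q i s)) ->
  0 < t0 <= 1 -> tangent_to b1 (Z1 q) t0 -> tangent_to b2 (Z2 q) t0 ->
  forall t, 0 < t <= 1 -> normal_coord b1 (Z1 q t) = 0 /\ normal_coord b2 (Z2 q t) = 0.
Proof.
move=> qv cq chi t01 T1 T2 t t'01.
have [qn1 vn1] := tangent_jac1 qv t01 T1; have [qn2 vn2] := tangent_jac2 qv t01 T2.
have chi_t0 : in_chi (fun i => q i t0) by apply: chi; case/andP: t01 => /ltW -> ->.
(* q and its reflection solve Newton's equations with the same data at t0 *)
have fixed : forall i, refl_conf b2 (b1 (+) b2) (fun j => q j t) i = q i t :=
  newton_unique (newton_refl b2 (b1 (+) b2) qv) qv (collision_free_refl b2 (b1 (+) b2) cq) cq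
    t01 (fun i => conj (refl_conf_id chi_t0 qn1 qn2 i)
                       (refl_conf_id (newton_in_chi qv chi t01) vn1 vn2 i)) t'01.
split; apply/axis_refl_fixed.
- have : jac1 (refl_conf b2 (b1 (+) b2) (fun i => q i t)) = Z1 q t by rewrite /jac1 !fixed.
  by rewrite jac1_refl -addbA addbb addbF.
- have : jac2 (refl_conf b2 (b1 (+) b2) (fun i => q i t)) = Z2 q t by rewrite /jac2 !fixed.
  by rewrite jac2_refl.
Qed.

End AxisInvariance.

Theorem proposition5p5 (R : realType) (q : 'I_3 -> R -> pt R) (t0 : R) :
  is_minimizer q ->
  collision_free q ->
  newton q ->
  0 < t0 <= 1 ->
  (tangent_x (Z1 q) t0 \/ tangent_y (Z1 q) t0) ->
  (tangent_x (Z2 q) t0 \/ tangent_y (Z2 q) t0) ->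
  stays_on_axes (Z1 q) t0 /\ stays_on_axes (Z2 q) t0.
Proof.
move=> [w [[_ [chi _]] _]] cq [v qv] t01 H1 H2.
have key b1 b2 := @tangent_axes_invariant R q v b1 b2 t0 qv cq chi t01.
have [b1 T1] : exists b1, tangent_to b1 (Z1 q) t0 by case: H1; [exists true | exists false].
have [b2 T2] : exists b2, tangent_to b2 (Z2 q) t0 by case: H2; [exists true | exists false].
split; split=> T t t01'.
- exact: (key true b2 T T2 t t01').1.
- exact: (key false b2 T T2 t t01').1.
- exact: (key b1 true T1 T t t01').2.
- exact: (key b1 false T1 T t t01').2.
Qed.
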